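(* Let $q$ be a prime power and $n \ge 1$. Let $a : M_n(\mathbb{F}_q) \to \mathbb{R}$ be a factorization function. Then there is a function $\varphi : M_n(\mathbb{F}_q) \to \mathbb{R}$ of von Mangoldt type such that $\varphi(f) = a(f)$ for all squarefree $f \in M_n(\mathbb{F}_q)$.
   Context: $M_n(\mathbb{F}_q)$ is the set of monic degree-$n$ polynomials in $\mathbb{F}_q[x]$. A factorization function is a function $a : M_n(\mathbb{F}_q) \to \mathbb{R}$ such that whenever $f = P_1^{e_1}\cdots P_k^{e_k}$ with $P_i$ distinct monic irreducible polynomials, $a(f)$ depends only on the data $(\deg P_1, e_1; \dots; \deg P_k, e_k)$. For $(z_1,\dots,z_n) \in \overline{\mathbb{F}}_q^{\,n}$ and $\sigma \in S_n$, $\delta_\sigma(z_1,\dots,z_n) = 1$ if $\mathrm{Frob}_q(z_1,\dots,z_n) = \sigma(z_1,\dots,z_n)$ (Frobenius $z\mapsto z^q$ applied coordinatewise equals the permutation $\sigma$ of coordinates) and $0$ otherwise. A function $\varphi$ is of von Mangoldt type if there are real coefficients $(c_\sigma)_{\sigma \in S_n}$ with $\varphi(f) = \sum_{(z_1,\dots,z_n) \in \overline{\mathbb{F}}_q^{\,n},\, f = \prod_i (x - z_i)} \sum_{\sigma \in S_n} c_\sigma \delta_\sigma(z_1,\dots,z_n)$ for all $f$. *)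

From HB Require Import structures.
From mathcomp Require Import all_boot all_order all_algebra all_fingroup all_field.
From mathcomp Require Import boolp classical_sets fsbigop reals.
Set Implicit Arguments. Unset Strict Implicit. Unset Printing Implicit Defensive.
Import Order.TTheory GRing.Theory Num.Theory.
Local Open Scope ring_scope.

Definition monic_deg (F : fieldType) (n : nat) (f : {poly F}) : Prop :=
  f \is monic /\ size f = n.+1.

Definition squarefree_poly (F : fieldType) (f : {poly F}) : Prop :=
  forall g : {poly F}, (1 < size g)%N -> ~~ (g * g %| f).

(* a : M_n(F) -> R is a factorization function: a(f) depends only on the
   data (deg P_1, e_1; ...; deg P_k, e_k) of the factorization of f into
   distinct monic irreducibles P_i with exponents e_i >= 1 (up to reordering,
   which is absorbed in the choice of indexing of the Q_i). *)
Definition factorization_function (F : fieldType) (R : nzRingType) (n : nat)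
    (a : {poly F} -> R) : Prop :=
  forall (k : nat) (P Q : 'I_k -> {poly F}) (e : 'I_k -> nat) (f g : {poly F}),
    monic_deg n f -> monic_deg n g ->
    injective P -> injective Q ->
    (forall i, P i \is monic /\ irreducible_poly (P i)) ->
    (forall i, Q i \is monic /\ irreducible_poly (Q i)) ->
    (forall i, 0 < e i)%N ->
    (forall i, size (P i) = size (Q i)) ->
    f = \prod_(i < k) P i ^+ e i ->
    g = \prod_(i < k) Q i ^+ e i ->
    a f = a g.

Definition delta (F : finFieldType) (L : fieldType) (n : nat) (R : nzRingType)
    (s : 'S_n) (z : n.-tuple L) : R :=
  if [forall i : 'I_n, tnth z i ^+ #|F| == tnth z (s i)] then 1 else 0.

Definition root_tuples (F : fieldType) (L : fieldType) (iota : {rmorphism F -> L})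
    (n : nat) (f : {poly F}) : set (n.-tuple L) :=
  [set z | map_poly iota f = \prod_(i < n) ('X - (tnth z i)%:P)].

Definition von_mangoldt_type (F : finFieldType) (L : fieldType)
    (iota : {rmorphism F -> L}) (R : realType) (n : nat)
    (c : 'S_n -> R) (phi : {poly F} -> R) : Prop :=
  forall f : {poly F}, monic_deg n f ->
    phi f = \sum_(z \in @root_tuples F L iota n f)
              \sum_(s : 'S_n) c s * delta F R s z.

From HB Require Import structures.
From mathcomp Require Import all_boot all_order all_algebra all_fingroup all_field.
From mathcomp Require Import boolp classical_sets fsbigop reals.
Set Implicit Arguments. Unset Strict Implicit. Unset Printing Implicit Defensive.
Import Order.TTheory GRing.Theory Num.Theory.
Local Open Scope ring_scope.

(* Let q = #|F|. For a squarefree f of degree n, the roots z_1..z_n in the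
   algebraic closure are distinct, so for each ordering z of them there is a
   unique s with z_i ^ q = z_(s i); the cycles of s cut out the irreducible
   factors of f, and a cycle of length d gives a factor of degree d. Hence
   a(f) only depends on s, and c s := a(f) / n! (for any such f, and 0 if there
   is none) works: each of the n! orderings of the roots of a squarefree f
   contributes exactly one term c s = a(f) / n!. *)

Section MultisetDivisibility.
Variable R : idomainType.

Lemma dvdp_prod_XsubC_count (s t : seq R) :
  (forall x, count_mem x s <= count_mem x t)%N ->
  \prod_(x <- s) ('X - x%:P) %| \prod_(x <- t) ('X - x%:P).
Proof.
elim: s t => [|y s IH] t le_st; first by rewrite big_nil dvd1p.
have yt : y \in t.
  by rewrite -has_pred1 has_count; apply: leq_trans (le_st y); rewrite /= eqxx.
rewrite big_cons (perm_big _ (perm_to_rem yt)) big_cons dvdp_mul2l ?polyXsubC_eq0 //.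
apply: IH => x; have := le_st x; rewrite /= count_rem yt /=.
case: (eqVneq x y) => [->|_] /=; last by rewrite add0n subn0.
by rewrite add1n => h; rewrite leq_subRL ?add1n // (leq_trans _ h).
Qed.

End MultisetDivisibility.

Section Repeated.
Variable T : eqType.
Implicit Types s : seq T.

Definition repeated s := [seq y <- undup s | (1 < count_mem y s)%N].

Lemma mem_repeated s y : (y \in repeated s) = (1 < count_mem y s)%N.
Proof.
rewrite mem_filter mem_undup andb_idr // => gt1.
by rewrite -has_pred1 has_count (leq_trans _ gt1).
Qed.

Lemma uniq_repeated s : uniq (repeated s).
Proof. by rewrite filter_uniq ?undup_uniq. Qed.

Lemma repeated_nil_uniq s : repeated s = [::] -> uniq s.
Proof.
move=> rep0; apply: count_mem_uniq => y.
have := mem_repeated s y; rewrite rep0 in_nil.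
case: (boolP (y \in s)) => [ys|/count_memPn -> //].
have : (0 < count_mem y s)%N by rewrite -has_count has_pred1.
by case: (count_mem y s) => [|[|]].
Qed.

Lemma count_repeated2 s y :
  (count_mem y (repeated s ++ repeated s) <= count_mem y s)%N.
Proof.
rewrite count_cat count_uniq_mem ?uniq_repeated // mem_repeated.
by case: (count_mem y s) => [|[|]].
Qed.

Lemma perm_map_self (f : T -> T) s :
  injective f -> uniq s -> {subset map f s <= s} -> perm_eq (map f s) s.
Proof.
move=> f_inj s_uniq fs_s.
have fs_uniq : uniq (map f s) by rewrite map_inj_uniq.
have [_ fs_eq_s] := uniq_min_size fs_uniq fs_s (eq_leq (esym (size_map f s))).
exact: uniq_perm.
Qed.

Lemma perm_map_repeated (f : T -> T) s : injective f ->
  perm_eq (map f s) s -> perm_eq (map f (repeated s)) (repeated s).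
Proof.
move=> f_inj fs_s; apply: perm_map_self => //; first exact: uniq_repeated.
move=> _ /mapP[y + ->]; rewrite !mem_repeated.
suff -> : count_mem (f y) s = count_mem y s by [].
by rewrite -(seq.permP fs_s) count_map; apply: eq_count => x; apply: inj_eq.
Qed.

End Repeated.

(* [iota] is a dummy argument: it records that [L] has the characteristic of
   [F], which is what makes [frob] additive. *)
Definition frob (F : finFieldType) (L : fieldType) (iota : {rmorphism F -> L})
  (x : L) : L := x ^+ #|F|.

Section Frobenius.
Variables (F : finFieldType) (L : fieldType) (iota : {rmorphism F -> L}).
Local Notation frob := (frob iota).

Lemma pnat_pchar_card : [pchar L].-nat #|F|.
Proof.
have [p _ pcharFp] := finPcharP F.
have pcharLp : p \in [pchar L] by rewrite (fmorph_pchar iota).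
by rewrite (eq_pnat _ (pcharf_eq pcharLp)) (card_pprimeChar pcharFp) pnatX pnat_id
  ?(pcharf_prime pcharFp).
Qed.

Lemma frob_is_nmod_morphism : nmod_morphism frob.
Proof.
split=> [|x y]; first by rewrite /frob expr0n; case: #|F| (finNzRing_gt1 F).
by rewrite /frob exprDn_pchar // pnat_pchar_card.
Qed.

Lemma frob_is_monoid_morphism : monoid_morphism frob.
Proof. by split=> [|x y]; rewrite /frob ?expr1n ?exprMn. Qed.

HB.instance Definition _ := GRing.isNmodMorphism.Build L L frob frob_is_nmod_morphism.
HB.instance Definition _ :=
  GRing.isMonoidMorphism.Build L L frob frob_is_monoid_morphism.

Lemma frob_inj : injective frob.
Proof. exact: fmorph_inj. Qed.

Lemma frob_iota c : frob (iota c) = iota c.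
Proof. by rewrite /frob -rmorphXn expf_card. Qed.

Lemma map_frob_iota (p : {poly F}) :
  map_poly frob (map_poly iota p) = map_poly iota p.
Proof. by rewrite -map_poly_comp; apply: eq_map_poly => c /=; rewrite frob_iota. Qed.

Lemma root_map_frob (p : {poly F}) x :
  root (map_poly iota p) x -> root (map_poly iota p) (frob x).
Proof. by move=> /rootP px; apply/rootP; rewrite -map_frob_iota horner_map px raddf0. Qed.

Lemma frob_fixed_iota x : frob x = x -> exists c, x = iota c.
Proof.
move=> fx; have := congr1 (map_poly iota) (finField_genPoly F).
rewrite rmorphB /= map_polyXn map_polyX rmorph_prod /= => genE.
have : root (map_poly iota ('X^#|F| - 'X)) x.
  by rewrite rmorphB /= map_polyXn map_polyX rootE !hornerE -/(frob x) fx subrr.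
rewrite rmorphB /= map_polyXn map_polyX genE rootE horner_prod prodf_seq_eq0.
case/hasP=> c _; rewrite /= map_polyXsubC hornerXsubC subr_eq0 => /eqP ->.
by exists c.
Qed.

(* Coefficientwise preimage under [iota], with junk value 0 off its image. *)
Definition descent (p : {poly L}) : {poly F} :=
  \poly_(i < size p) odflt 0 [pick c | iota c == p`_i].

Lemma descentK p : map_poly frob p = p -> map_poly iota (descent p) = p.
Proof.
move=> frob_p; apply/polyP => i; rewrite coef_map coef_poly.
case: ltnP => [_|le_p_i]; last by rewrite raddf0 nth_default.
have /frob_fixed_iota[c ->] : frob p`_i = p`_i by rewrite -coef_map frob_p.
by case: pickP => [d /eqP //|/(_ c)]; rewrite eqxx.
Qed.

Lemma descent_prod_XsubC (s : seq L) : perm_eq (map frob s) s ->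
  map_poly iota (descent (\prod_(x <- s) ('X - x%:P))) =
  \prod_(x <- s) ('X - x%:P).
Proof.
move=> frob_s; apply: descentK.
by rewrite map_prod_XsubC -(big_map frob xpredT (fun y => 'X - y%:P)) (perm_big _ frob_s).
Qed.

Lemma perm_map_frob_roots (f : {poly F}) (s : seq L) :
  map_poly iota f = \prod_(x <- s) ('X - x%:P) -> perm_eq (map frob s) s.
Proof.
move=> fE; apply: prod_XsubC_eq.
by rewrite big_map -map_prod_XsubC -fE map_frob_iota.
Qed.

(* The repeated roots of f form a Frobenius-stable multiset, so their product
   descends to a polynomial g over F with g * g | f. *)
Lemma squarefree_roots_uniq (f : {poly F}) (s : seq L) :
  map_poly iota f = \prod_(x <- s) ('X - x%:P) -> squarefree_poly f -> uniq s.
Proof.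
move=> fE sqf_f.
have OE := descent_prod_XsubC (perm_map_repeated frob_inj (perm_map_frob_roots fE)).
set g := descent _ in OE.
apply: contraT => s_nuniq.
have g_gt1 : (1 < size g)%N.
  rewrite -(size_map_poly iota) OE size_prod_XsubC ltnS lt0n size_eq0.
  by apply: contra s_nuniq => /eqP /repeated_nil_uniq.
suff : g * g %| f by rewrite (negPf (sqf_f g g_gt1)).
rewrite -(dvdp_map iota) rmorphM /= OE fE -big_cat.
exact/dvdp_prod_XsubC_count/count_repeated2.
Qed.

End Frobenius.

Section FrobeniusPermutation.
Variables (F : finFieldType) (L : closedFieldType) (iota : {rmorphism F -> L}).
Variable n : nat.
Local Notation frob := (frob iota).
Local Notation roots f := (@root_tuples F L iota n f).
Implicit Types (f : {poly F}) (z : n.-tuple L) (s : 'S_n) (C : {set 'I_n}) (j x : 'I_n).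

Lemma root_tuplesE f z :
  roots f z = (map_poly iota f = \prod_(x <- z) ('X - x%:P)).
Proof. by rewrite /root_tuples /= big_tuple. Qed.

Lemma exists_root_tuple f : monic_deg n f -> exists z, roots f z.
Proof.
case=> f_monic f_size; have [r rE] := closed_field_poly_normal (map_poly iota f).
rewrite (monicP _) ?map_monic // scale1r in rE.
have /eqP r_size : size r = n.
  by have := size_map_poly iota f; rewrite rE size_prod_XsubC f_size => -[].
by exists (Tuple r_size); rewrite root_tuplesE.
Qed.

Lemma root_tuples_perm f z (t : 'S_n) : roots f z ->
  roots f [tuple tnth z (t i) | i < n].
Proof.
rewrite /root_tuples /= => ->.
by rewrite (reindex_inj (@perm_inj _ t)); apply: eq_bigr => i _; rewrite tnth_mktuple.
Qed.

Definition frob_perm s z := forall i, frob (tnth z i) = tnth z (s i).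

Lemma frob_permP s z :
  reflect (frob_perm s z) [forall i, tnth z i ^+ #|F| == tnth z (s i)].
Proof. by apply: (iffP forallP) => h i; apply/eqP; apply: h. Qed.

Lemma exists_frob_perm f z : roots f z -> exists s, frob_perm s z.
Proof.
rewrite root_tuplesE => /perm_map_frob_roots /tuple_permP[s frob_zE].
exists s => i; have := congr1 (nth 0 ^~ i) frob_zE.
by rewrite (nth_map 0) ?size_tuple // -!tnth_nth tnth_mktuple.
Qed.

Lemma frob_perm_inj z s t : uniq z -> frob_perm s z -> frob_perm t z -> s = t.
Proof.
by move=> /tuple_uniqP z_inj fs ft; apply/permP => i; apply: z_inj; rewrite -fs -ft.
Qed.

Lemma tnth_frob_permX s z j k : frob_perm s z ->
  tnth z ((s ^+ k)%g j) = iter k frob (tnth z j).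
Proof. by move=> fs; rewrite permX; elim: k => //= k <-; rewrite fs. Qed.

Definition cycle_poly z (C : {set 'I_n}) := \prod_(j in C) ('X - (tnth z j)%:P).

Lemma monic_cycle_poly z C : cycle_poly z C \is monic.
Proof. exact: monic_prod_XsubC. Qed.

Lemma size_cycle_poly z C : size (cycle_poly z C) = #|C|.+1.
Proof. by rewrite /cycle_poly -big_enum size_prod_XsubC cardE. Qed.

Lemma root_cycle_poly z C (r : L) :
  root (cycle_poly z C) r -> exists2 j, j \in C & r = tnth z j.
Proof.
rewrite rootE /cycle_poly horner_prod => /prodf_eq0[j jC].
by rewrite hornerXsubC subr_eq0 => /eqP ->; exists j.
Qed.

Lemma cycle_poly_root z C j : j \in C -> root (cycle_poly z C) (tnth z j).
Proof.
move=> jC; rewrite rootE /cycle_poly horner_prod.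
by apply/prodf_eq0; exists j => //; rewrite hornerXsubC subrr.
Qed.

Lemma map_frob_cycle_poly s z x : frob_perm s z ->
  map_poly frob (cycle_poly z (porbit s x)) = cycle_poly z (porbit s x).
Proof.
move=> fs; rewrite /cycle_poly map_prod_XsubC [RHS](reindex_inj (@perm_inj _ s)) /=.
apply: eq_big => j; last by rewrite fs.
by rewrite -!eq_porbit_mem -(porbit_perm s 1 j) expg1.
Qed.

Lemma map_descent_cycle_poly s z x : frob_perm s z ->
  map_poly iota (descent iota (cycle_poly z (porbit s x))) = cycle_poly z (porbit s x).
Proof. by move=> fs; apply/descentK/map_frob_cycle_poly. Qed.

(* A polynomial over F vanishing at one root of a cycle vanishes at its
   Frobenius iterates, i.e. on the whole cycle. *)
Lemma cycle_poly_dvdp s z j (d : {poly F}) : uniq z -> frob_perm s z ->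
  root (map_poly iota d) (tnth z j) -> cycle_poly z (porbit s j) %| map_poly iota d.
Proof.
move=> z_uniq fs dz_j.
rewrite /cycle_poly -big_enum -(big_map (tnth z) predT (fun r => 'X - r%:P)).
apply: uniq_roots_dvdp; last first.
  by rewrite uniq_rootsE map_inj_uniq ?enum_uniq //; apply/tuple_uniqP.
apply/allP => _ /mapP[k + ->]; rewrite mem_enum => /porbitP[i ->].
by rewrite tnth_frob_permX //; elim: i => //= i; apply: root_map_frob.
Qed.

Lemma cycle_poly_irreducible s z x : uniq z -> frob_perm s z ->
  irreducible_poly (descent iota (cycle_poly z (porbit s x))).
Proof.
move=> z_uniq fs; set P := descent _ _.
have PE : map_poly iota P = cycle_poly z (porbit s x) by apply: map_descent_cycle_poly.
have P_neq0 : P != 0.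
  by rewrite -(map_poly_eq0 iota) PE monic_neq0 ?monic_cycle_poly.
split=> [|d d_gt1 dP].
  by rewrite -(size_map_poly iota) PE size_cycle_poly ltnS lt0n card_porbit_neq0.
have [r dr] : exists r, root (map_poly iota d) r.
  by apply/closed_rootP; rewrite size_map_poly.
have dz : map_poly iota d %| cycle_poly z (porbit s x) by rewrite -PE dvdp_map.
have [j jx rE] := root_cycle_poly (root_dvdp dz dr).
have /eqP xE : porbit s j == porbit s x by rewrite eq_porbit_mem.
have Pd : map_poly iota P %| map_poly iota d.
  by rewrite PE -xE; apply: cycle_poly_dvdp => //; rewrite -rE.
rewrite -dvdp_size_eqp // eqn_leq dvdp_leq //=.
rewrite -(size_map_poly iota d) -(size_map_poly iota P) dvdp_leq // map_poly_eq0.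
by apply: contraTneq dP => ->; rewrite dvd0p.
Qed.

Lemma fsbig_root_tuples (V : nmodType) f z0 (G : n.-tuple L -> V) :
  roots f z0 -> uniq z0 ->
  \sum_(z \in roots f) G z = \sum_(t : 'S_n) G [tuple tnth z0 (t i) | i < n].
Proof.
move=> fz0 /tuple_uniqP z0_inj.
pose perm_tuple (t : 'S_n) := [tuple tnth z0 (t i) | i < n].
have perm_tuple_inj : injective perm_tuple.
  move=> t1 t2 t12; apply/permP => i; apply: z0_inj.
  by have := congr1 (fun u => tnth u i) t12; rewrite !tnth_mktuple.
have roots_perm_tuple z : roots f z -> exists t, z = perm_tuple t.
  move=> fz; have : perm_eq z z0.
    by apply: prod_XsubC_eq; move: fz fz0; rewrite !root_tuplesE => <- <-.
  by case/tuple_permP=> t zE; exists t; apply: val_inj.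
rewrite (fsbigE [seq perm_tuple t | t <- enum 'S_n]).
- rewrite big_map (eq_bigl xpredT) ?big_enum // => t.
  exact/mem_set/root_tuples_perm.
- by rewrite map_inj_uniq ?enum_uniq.
- by move=> _ /= /mapP[t _ ->]; apply: root_tuples_perm.
- move=> z /roots_perm_tuple[t ->]; by rewrite map_f ?mem_enum.
Qed.

Section CycleFactorization.
Variables (z : n.-tuple L) (s : 'S_n).
Hypotheses (z_uniq : uniq z) (z_frob : frob_perm s z).

Definition cycle_factor (i : 'I_#|porbits s|) : {poly F} :=
  descent iota (cycle_poly z (enum_val i)).

Lemma map_cycle_factor i : map_poly iota (cycle_factor i) = cycle_poly z (enum_val i).
Proof.
by rewrite /cycle_factor; case/imsetP: (enum_valP i) => x _ ->; apply: map_descent_cycle_poly.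
Qed.

Lemma cycle_factor_monic i : cycle_factor i \is monic.
Proof. by rewrite -(map_monic iota) map_cycle_factor monic_cycle_poly. Qed.

Lemma cycle_factor_irreducible i : irreducible_poly (cycle_factor i).
Proof.
by rewrite /cycle_factor; case/imsetP: (enum_valP i) => x _ ->; apply: cycle_poly_irreducible.
Qed.

Lemma size_cycle_factor i : size (cycle_factor i) = #|enum_val i|.+1.
Proof. by rewrite -(size_map_poly iota) map_cycle_factor size_cycle_poly. Qed.

Lemma cycle_factor_inj : injective cycle_factor.
Proof.
move=> i j /(congr1 (map_poly iota)); rewrite !map_cycle_factor => ij_eq.
apply: enum_val_inj; case/imsetP: (enum_valP i) (enum_valP j) => x _ ix /imsetP[y _ jy].
have := cycle_poly_root z (porbit_id s x); rewrite -ix ij_eq.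
case/root_cycle_poly => w + /(elimT (tuple_uniqP z) z_uniq) xw; rewrite -xw jy => xy.
by rewrite ix; apply/eqP; rewrite eq_porbit_mem.
Qed.

Lemma prod_cycle_factor f : roots f z -> f = \prod_i cycle_factor i ^+ 1.
Proof.
rewrite /root_tuples /= => fE; apply: (@map_poly_inj _ _ iota); rewrite fE rmorph_prod.
under [RHS]eq_bigr => i _ do rewrite /= expr1 map_cycle_factor.
rewrite -(big_enum_val (cycle_poly z)).
rewrite (partition_big (porbit s) (mem (porbits s))) /=; last by move=> i _; apply: imset_f.
by apply: eq_bigr => _ /imsetP[x _ ->]; apply: eq_bigl => i; apply: eq_porbit_mem.
Qed.

End CycleFactorization.

End FrobeniusPermutation.

Section VonMangoldtCoefficients.
Variables (F : finFieldType) (L : closedFieldType) (iota : {rmorphism F -> L}).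
Variables (R : realType) (n : nat) (a : {poly F} -> R).
Hypothesis a_fact : factorization_function n a.
Local Notation roots f := (@root_tuples F L iota n f).

Definition frob_class (s : 'S_n) (f : {poly F}) :=
  [/\ monic_deg n f, squarefree_poly f & exists2 z, roots f z & frob_perm iota s z].

Lemma squarefree_root_tuple_uniq f z : squarefree_poly f -> roots f z -> uniq z.
Proof. by move=> f_sqf; rewrite root_tuplesE => /squarefree_roots_uniq; apply. Qed.

Lemma factorization_function_frob_class s f g :
  frob_class s f -> frob_class s g -> a f = a g.
Proof.
case=> f_deg f_sqf [z fz zs] [g_deg g_sqf [w gw ws]].
have z_uniq := squarefree_root_tuple_uniq f_sqf fz.
have w_uniq := squarefree_root_tuple_uniq g_sqf gw.
apply: (a_fact f_deg g_deg (cycle_factor_inj z_uniq zs) (cycle_factor_inj w_uniq ws)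
  _ _ _ _ (prod_cycle_factor zs fz) (prod_cycle_factor ws gw)) => // i.
1,2: by split; [apply: cycle_factor_monic | apply: cycle_factor_irreducible].
by rewrite !size_cycle_factor.
Qed.

Definition vm_coef (s : 'S_n) : R :=
  if pselect (exists f, frob_class s f) is left ex then a (sval (cid ex)) / n`!%:R
  else 0.

Lemma vm_coefE s f : frob_class s f -> vm_coef s = a f / n`!%:R.
Proof.
move=> sf; rewrite /vm_coef; case: pselect => [ex|]; last by case; exists f.
by case: (cid ex) => g sg /=; rewrite (factorization_function_frob_class sg sf).
Qed.

Lemma sum_vm_coef_delta f z : monic_deg n f -> squarefree_poly f -> roots f z ->
  \sum_(s : 'S_n) vm_coef s * delta F R s z = a f / n`!%:R.
Proof.
move=> f_deg f_sqf fz; have z_uniq := squarefree_root_tuple_uniq f_sqf fz.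
have [s zs] := exists_frob_perm fz.
rewrite (bigD1 s) //= big1 => [|t ts]; rewrite /delta.
  rewrite (introT (frob_permP iota s z) zs) mulr1 addr0.
  by apply: vm_coefE; split=> //; exists z.
case: (frob_permP iota t z) => [zt|_]; last by rewrite mulr0.
by rewrite (frob_perm_inj z_uniq zt zs) eqxx in ts.
Qed.

End VonMangoldtCoefficients.

Theorem proposition4p6 (F : finFieldType) (L : closedFieldType)
    (iota : {rmorphism F -> L}) (R : realType) (n : nat) (a : {poly F} -> R) :
  (0 < n)%N -> @factorization_function F R n a ->
  exists (c : 'S_n -> R) (phi : {poly F} -> R),
    @von_mangoldt_type F L iota R n c phi /\
    (forall f : {poly F}, monic_deg n f -> squarefree_poly f -> phi f = a f).
Proof.
move=> _ a_fact; pose c : 'S_n -> R := vm_coef iota a.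
exists c, (fun f => \sum_(z \in @root_tuples F L iota n f) \sum_s c s * delta F R s z).
split=> // f f_deg f_sqf.
have [z0 fz0] := exists_root_tuple iota f_deg.
have z0_uniq := squarefree_root_tuple_uniq f_sqf fz0.
rewrite (fsbig_root_tuples _ fz0 z0_uniq).
under eq_bigr => t _ do
  rewrite (sum_vm_coef_delta a_fact f_deg f_sqf (root_tuples_perm t fz0)).
rewrite sumr_const -[#|_|]/#|'S_n| card_Sn -(mulr_natr (a f / _)).
by rewrite divfK // pnatr_eq0 -lt0n fact_gt0.
Qed.
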